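(* Let $A$ be an Artin algebra. Then there exists a nonnegative integer $m$ such that $\operatorname{ed}\Omega^{m}(A\text{-mod})=\operatorname{ed}\Omega^{m+i}(A\text{-mod})$ for every $i\ge1$.
   Context: $\Omega^0(A\text{-mod})=A\text{-mod}$; for $n\ge1$, $\Omega^n(A\text{-mod})$ is the full subcategory of modules $K$ admitting an exact sequence $0\to K\to P^0\to\cdots\to P^{n-1}\to M\to0$ with $P^j$ projective. For subcategories $\mathcal T_1,\mathcal T_2$, $\mathcal T_1\bullet\mathcal T_2:=\operatorname{add}\{X\mid\exists$ exact $0\to T_1\to X\to T_2\to0$, $T_i\in\mathcal T_i\}$; $[T]_0=\{0\}$, $[T]_1=\operatorname{add}(T)$, $[T]_n=[T]_1\bullet[T]_{n-1}$; $\operatorname{ed}\mathcal C=\inf\{n\ge0\mid\mathcal C\subseteq[T]_{n+1}$ for some module $T\}$. *)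

From HB Require Import structures.
From mathcomp Require Import all_boot all_order all_algebra.
From mathcomp Require Import boolp.
Set Implicit Arguments. Unset Strict Implicit. Unset Printing Implicit Defensive.
Import GRing.Theory.
Local Open Scope ring_scope.

Definition is_ideal (R : comNzRingType) (I : R -> Prop) : Prop :=
  I 0 /\ (forall x y, I x -> I y -> I (x + y)) /\ (forall r x, I x -> I (r * x)).

Definition artinian (R : comNzRingType) : Prop :=
  forall I : nat -> R -> Prop,
    (forall n, is_ideal (I n)) ->
    (forall n x, I n.+1 x -> I n x) ->
    exists N, forall n, (N <= n)%N -> forall x, I n x <-> I N x.

Definition fin_gen (S : pzRingType) (M : lmodType S) : Prop :=
  exists s : seq M, forall x : M,
    exists c : 'I_(size s) -> S, x = \sum_(i < size s) c i *: s`_i.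

Definition artin_algebra (R : comNzRingType) (A : algType R) : Prop :=
  artinian R /\ fin_gen (A : lmodType R).

Section Modules.
Variable A : pzRingType.

(* A "subcategory" = class of (left) A-modules. *)
Definition modclass := lmodType A -> Prop.

Definition Amod : modclass := fun M => fin_gen M.

Definition projective (P : lmodType A) : Prop :=
  forall (M N : lmodType A) (g : {linear M -> N}) (h : {linear P -> N}),
    (forall y, exists x, g x = y) ->
    exists h' : {linear P -> M}, forall p, g (h' p) = h p.

Definition short_exact (X Y Z : lmodType A)
    (f : {linear X -> Y}) (g : {linear Y -> Z}) : Prop :=
  injective f /\ (forall z, exists y, g y = z) /\
  (forall y, g y = 0 <-> exists x, y = f x).

(* Omega^n(A-mod).  K in Omega^{n+1} iff there is a short exact sequence
   0 -> K -> P -> C -> 0 with P f.g. projective and C in Omega^n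
   (splicing of  0 -> K -> P^0 -> ... -> P^n -> M -> 0). *)
Fixpoint Omega (n : nat) : modclass :=
  match n with
  | 0 => Amod
  | n'.+1 => fun K => Amod K /\
      exists (P C : lmodType A) (f : {linear K -> P}) (g : {linear P -> C}),
        Amod P /\ projective P /\ short_exact f g /\ Omega n' C
  end.

(* add(C): direct summands of finite direct sums of modules in C *)
Definition addC (C : modclass) : modclass := fun X =>
  exists (n : nat) (Y : 'I_n -> lmodType A)
         (f : forall i, {linear X -> Y i}) (g : forall i, {linear Y i -> X}),
    (forall i, C (Y i)) /\ (forall x, \sum_(i < n) g i (f i x) = x).

Definition isomorphic (X Y : lmodType A) : Prop :=
  exists (f : {linear X -> Y}) (g : {linear Y -> X}), cancel f g /\ cancel g f.

Definition addT (T : lmodType A) : modclass := addC (fun Y => isomorphic Y T).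

Definition bullet (C1 C2 : modclass) : modclass :=
  addC (fun X => exists (T1 T2 : lmodType A) (f : {linear T1 -> X})
                        (g : {linear X -> T2}),
           C1 T1 /\ C2 T2 /\ short_exact f g).

Definition zero_module (X : lmodType A) : Prop := forall x : X, x = 0.

Fixpoint level (T : lmodType A) (n : nat) : modclass :=
  match n with
  | 0 => zero_module
  | 1 => addT T
  | n'.+1 => bullet (addT T) (level T n')
  end.

Definition ed_le (C : modclass) (n : nat) : Prop :=
  exists T : lmodType A, Amod T /\ forall X, C X -> level T n.+1 X.

(* ed C = inf{n | ...}, None = infinity (inf of the empty set) *)
Definition ext_dim (C : modclass) : option nat :=
  match pselect (exists n, ed_le C n) with
  | left H =>
      Some (ex_minn (P := fun n => `[< ed_le C n >])
              (let: ex_intro n Hn := H in ex_intro _ n (asboolT Hn)))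
  | right _ => None
  end.

End Modules.
Arguments Omega A n : clear implicits.

From mathcomp Require Import all_boot all_order all_algebra.
From mathcomp Require Import boolp.

(* The syzygy classes decrease, Omega^(n+1)(A-mod) is contained in
   Omega^n(A-mod), and the property "C is contained in [T]_(k+1) for some T"
   passes to subclasses; hence n |-> ed Omega^n(A-mod) is nonincreasing in
   N u {oo} and so eventually constant. *)

Lemma OmegaS_sub (B : pzRingType) n (X : lmodType B) :
  Omega B n.+1 X -> Omega B n X.
Proof.
elim: n X => [|n IHn] X /=; first by case.
case=> HX [P [C [f [g [HP [projP [exact_fg /IHn HC]]]]]]].
by split=> //; exists P, C, f, g.
Qed.

Lemma Omega_sub (B : pzRingType) m n (X : lmodType B) :
  (m <= n)%N -> Omega B n X -> Omega B m X.
Proof.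
move=> /subnKC <-; elim: (n - m)%N X => [|k IHk] X; first by rewrite addn0.
by rewrite addnS => /OmegaS_sub /IHk.
Qed.

Section ExtensionDimension.
Variable B : pzRingType.

Lemma ed_le_sub (C D : modclass B) n :
  (forall X, C X -> D X) -> ed_le D n -> ed_le C n.
Proof. by move=> CD [T [HT DT]]; exists T; split=> // X /CD /DT. Qed.

Lemma ext_dimE (C : modclass B) k :
  ed_le C k -> (forall n, ed_le C n -> (k <= n)%N) -> ext_dim C = Some k.
Proof.
move=> Ck k_min; rewrite /ext_dim; case: pselect => [exC|]; last by case; exists k.
congr Some; case: ex_minnP => n /asboolP Cn n_min.
by apply/eqP; rewrite eqn_leq k_min // andbT n_min //; apply/asboolP.
Qed.

Lemma ext_dim_inf (C : modclass B) :
  ~ (exists n, ed_le C n) -> ext_dim C = None.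
Proof. by move=> noC; rewrite /ext_dim; case: pselect. Qed.

Variable C : nat -> modclass B.
Hypothesis C_decr : forall m n X, (m <= n)%N -> C n X -> C m X.

Lemma ext_dim_eventually_constant :
  exists m, forall n, (m <= n)%N -> ext_dim (C m) = ext_dim (C n).
Proof.
have [[k [n0 Ck]]|no_ed] := pselect (exists k n, ed_le (C n) k); last first.
  have no_ed_at l : ~ exists k, ed_le (C l) k.
    by move=> [k Ck]; apply: no_ed; exists k, l.
  by exists 0%N => n _; rewrite !ext_dim_inf.
have ex_k : exists k, `[< exists n, ed_le (C n) k >].
  by exists k; apply/asboolP; exists n0.
case: (ex_minnP ex_k) => {Ck n0}k /asboolP [n0 Ck] k_min.
have ext_dim_k n : ed_le (C n) k -> ext_dim (C n) = Some k.
  move=> Cnk; apply: ext_dimE => // l Cnl.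
  by apply: k_min; apply/asboolP; exists n.
exists n0 => n le_n0n; rewrite !ext_dim_k //.
by apply: ed_le_sub Ck => X; apply: C_decr.
Qed.

End ExtensionDimension.

Theorem proposition2p13 (R : comNzRingType) (A : algType R) :
  artin_algebra A ->
  exists m : nat, forall i : nat, (1 <= i)%N ->
    ext_dim (Omega A m) = ext_dim (Omega A (m + i)).
Proof.
move=> _; have [m Om_const] := @ext_dim_eventually_constant _ _ (@Omega_sub A).
by exists m => i _; apply: Om_const; rewrite leq_addr.
Qed.
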